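(* For every integer $n\geq 1$, the sequence $\Lambda_n$ of chains (defined in the context) is a 3-Gray code, i.e., any two consecutive chains in $\Lambda_n$, viewed as strings over the alphabet $\{0,1,*\}$, differ in at most three positions.
   Context: Let $D$ be the set of all bitstrings (including the empty string $\varepsilon$) with equally many $0$s and $1$s such that every prefix contains at least as many $0$s as $1$s. Each chain of the Greene–Kleitman symmetric chain decomposition of $Q_n$ (the hypercube on $\{0,1\}^n$) is encoded as a string of length $n$ over $\{0,1,*\}$ of the form $u_0*u_1*\cdots*u_{h-1}*u_h$ with $u_0,\ldots,u_h\in D$; its vertices are obtained by replacing the $*$s by $i$ ones followed by $h-i$ zeros, $i=0,\ldots,h$, and every such string occurs as a chain. The length $|C|$ of a chain $C$ is its number of $*$s. For a string $C$ over $\{0,1,*\}$ with at least two $*$s, $f(C)$ (resp. $\ell(C)$) denotes the string obtained by replacing the first two (resp. last two) $*$s by $0$ and $1$, respectively. For a sequence $\Gamma$, $\Gamma^R$ is its reversal, and $*C*$, $0C1$ denote concatenations. The sequences $\Lambda_n$ are defined inductively: for even $n$, $\Lambda_0:=\varepsilon$ (the one-element sequence consisting of the empty chain) and for odd $n$, $\Lambda_1:=*$. For $n\ge 0$, given $\Lambda_n=C_1,\ldots,C_N$, set $\Lambda_{n+2}:=\rho(C_1),\ldots,\rho(C_N)$ (concatenation of sequences), where $\rho(C):=\lambda(C)$ if $|C|\equiv n \pmod 4$ and $\rho(C):=\lambda(C)^R$ otherwise, and where for even $n$: $\lambda(C):= *C*,\ f( *C* ),\ f(\ell( *C* )),\ \ell(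 *C* )$ if $|C|\ge 2$, and $\lambda(C):=*C*,\ 0C1$ if $|C|=0$; for odd $n$: $\lambda(C):=*C*,\ \ell( *C* ),\ \ell(f( *C* )),\ f( *C* )$ if $|C|\ge 3$, and $\lambda(C):=*C*,\ \ell( *C* ),\ f( *C* )$ if $|C|=1$. *)

From HB Require Import structures.
From mathcomp Require Import all_boot.
Set Implicit Arguments. Unset Strict Implicit. Unset Printing Implicit Defensive.

Inductive sym := Zero | One | Star.

Definition sym_eqb (a b : sym) : bool :=
  match a, b with
  | Zero, Zero | One, One | Star, Star => true
  | _, _ => false
  end.

Lemma sym_eqP : Equality.axiom sym_eqb.
Proof. by case; case; constructor. Qed.

HB.instance Definition _ := hasDecEq.Build sym sym_eqP.

Definition chain := seq sym.

Definition clen (C : chain) : nat := count (pred1 Star) C.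

Fixpoint repl2 (a b : sym) (k : nat) (s : chain) : chain :=
  match s with
  | [::] => [::]
  | x :: s' =>
      if x == Star then
        match k with
        | 0 => a :: repl2 a b 1 s'
        | 1 => b :: s'
        | _ => x :: s'
        end
      else x :: repl2 a b k s'
  end.

Definition fC (C : chain) : chain := repl2 Zero One 0 C.
(* l(C): last two stars replaced by 0 and 1 respectively *)
Definition lC (C : chain) : chain := rev (repl2 One Zero 0 (rev C)).

Definition wrap (C : chain) : chain := Star :: rcons C Star.

Definition lam (n : nat) (C : chain) : seq chain :=
  if ~~ odd n then
    (if 2 <= clen C then
       [:: wrap C; fC (wrap C); fC (lC (wrap C)); lC (wrap C)]
     else [:: wrap C; Zero :: rcons C One])
  else
    (if 3 <= clen C then
       [:: wrap C; lC (wrap C); lC (fC (wrap C)); fC (wrap C)]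
     else [:: wrap C; lC (wrap C); fC (wrap C)]).

Definition rho (n : nat) (C : chain) : seq chain :=
  if clen C == n %[mod 4] then lam n C else rev (lam n C).

Fixpoint Lambda (n : nat) : seq chain :=
  match n with
  | 0 => [:: [::]]
  | 1 => [:: [:: Star]]
  | m.+2 => flatten [seq rho m C | C <- Lambda m]
  end.

(* number of positions in which two strings differ
   (positions beyond the end of the shorter string count as differing) *)
Definition ndiff (s t : chain) : nat :=
  count (fun i => onth s i != onth t i) (iota 0 (maxn (size s) (size t))).

Definition gray_code (k : nat) (L : seq chain) : Prop :=
  forall i, i.+1 < size L -> ndiff (nth [::] L i) (nth [::] L i.+1) <= k.

(* Write two chains of equal length as a word of columns and drop the columns
   holding the same bit in both; call the rest the profile of the pair.  By
   induction on n, the profile of two consecutive chains of Lambda_n is a core P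
   between two blocks of all-star columns, where P is one of
   [*0 *1], [0* 1*], [*0 *0 01], [0* 0* 10] (columns written top over bottom),
   or, with no star columns around it and n = 3 resp. 1 (mod 4), [*0 01 1*]
   resp. [0* 10 *1]; so the two chains differ in at most three positions.
   Within a block rho(C), consecutive chains are wrap(C) with its first or last
   two stars filled in ways that differ at one end only, giving a two-column
   core.  At the junction of the blocks of consecutive C, C', the two chains are
   wrap(C), wrap(C') or fillings of both at the same end.  Filling removes two
   star columns from the profile unless the core touches that end; then the core
   grows to three columns (n even), or the case is excluded by the star count
   mod 4, which fixes the direction of rho (n odd). *)

From mathcomp Require Import all_boot zify.
Set Implicit Arguments. Unset Strict Implicit. Unset Printing Implicit Defensive.

(** * Filling stars *)

Definition fill_head (r : seq sym) (x : sym) : sym * seq sym :=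
  if (x, r) is (Star, y :: r') then (y, r') else (x, r).

Fixpoint fill (r : seq sym) (s : chain) : chain :=
  if s is x :: s' then (fill_head r x).1 :: fill (fill_head r x).2 s' else [::].

Notation skip2 := [:: Star; Star].

Definition fill_back (r : seq sym) (s : chain) : chain := rev (fill r (rev s)).

Lemma fill_head_nonstar r x : x != Star -> fill_head r x = (x, r).
Proof. by case: x. Qed.

Lemma fill_nil s : fill [::] s = s.
Proof. by elim: s => // x s IH; case: x; rewrite /= IH. Qed.

Lemma fill_id r s : all (pred1 Star) r -> fill r s = s.
Proof.
elim: s r => // x s IH [|y r] hr; first exact: fill_nil.
by case/andP: hr => /eqP -> hr; case: x; rewrite /= IH.
Qed.

Lemma fill_clen0 r s : clen s = 0 -> fill r s = s.
Proof. by elim: s => //= x s IH; case: x => //= h; rewrite IH. Qed.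

Lemma fill_skip2 s : fill skip2 s = s.
Proof. exact: fill_id. Qed.

Lemma fill_back_skip2 s : fill_back skip2 s = s.
Proof. by rewrite /fill_back fill_skip2 revK. Qed.

Lemma repl2_fill a b k s : repl2 a b k s = fill (drop k [:: a; b]) s.
Proof.
elim: s k => [|x s IH] k //=.
case: x => //=; try by rewrite IH.
by case: k => [|[|k]] /=; rewrite ?IH ?fill_nil.
Qed.

Lemma fC_fill C : fC C = fill [:: Zero; One] C.
Proof. exact: repl2_fill. Qed.

Lemma lC_fill_back C : lC C = fill_back [:: One; Zero] C.
Proof. by rewrite /lC repl2_fill. Qed.

Lemma size_fill r s : size (fill r s) = size s.
Proof. by elim: s r => //= x s IH r; rewrite IH. Qed.

Lemma size_fill_back r s : size (fill_back r s) = size s.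
Proof. by rewrite /fill_back size_rev size_fill size_rev. Qed.

Lemma clen_rev s : clen (rev s) = clen s.
Proof. exact: count_rev. Qed.

Lemma clen_wrap C : clen (wrap C) = (clen C).+2.
Proof. by rewrite /wrap -cats1 /= /clen count_cat addn1. Qed.

Lemma clen_fill r s : size r <= clen s ->
  clen (fill r s) = clen s - count (predC1 Star) r.
Proof.
elim: s r => [|x s IH] r /=; first by case: r.
case: x => [||] /=; try exact: IH.
case: r => [|y r] /= hr; first by rewrite fill_nil subn0.
have := count_size (predC1 Star) r.
by rewrite IH //; case: y => /=; lia.
Qed.

Lemma clen_fill_back r s : size r <= clen s ->
  clen (fill_back r s) = clen s - count (predC1 Star) r.
Proof. by rewrite /fill_back clen_rev -(clen_rev s); apply: clen_fill. Qed.

Lemma fill_cat r u v : fill r (u ++ v) = fill r u ++ fill (drop (clen u) r) v.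
Proof.
elim: u r => [|x u IH] r /=; first by rewrite drop0.
case: x r => [||] [|y r] /=; rewrite IH ?drop_nil //.
Qed.

Lemma fill_back_cons r x s : size r <= clen s ->
  fill_back r (x :: s) = x :: fill_back r s.
Proof.
move=> hr; rewrite /fill_back rev_cons -cats1 fill_cat clen_rev drop_oversize //.
by rewrite fill_nil rev_cat.
Qed.

Lemma clen_fill_lb r s : clen s - size r <= clen (fill r s).
Proof.
elim: s r => [|x s IH] r //=.
case: x => [||] /=; try exact: IH.
case: r => [|y r] /=; first by rewrite fill_nil subn0.
by have := IH r; case: y => /=; lia.
Qed.

Lemma fill_back_fill p q s : size p + size q <= clen s ->
  fill p (fill_back q s) = fill_back q (fill p s).
Proof.
elim: s p => [|x s IH] p hs; first by rewrite /fill_back.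
case: p hs => [|y p] hs; first by rewrite !fill_nil.
have hq r : size r + size q <= clen s -> size q <= clen (fill r s).
  by move=> h; apply: leq_trans (clen_fill_lb r s); lia.
case: x hs => /= hs; rewrite fill_back_cons /=; try lia;
  by rewrite IH ?fill_back_cons //; try apply: hq; rewrite /=; lia.
Qed.

(** * Profiles of pairs of chains *)

Definition col := (sym * sym)%type.

Notation SS := (Star, Star).
Notation SZ := (Star, Zero).
Notation SO := (Star, One).
Notation ZS := (Zero, Star).
Notation OS := (One, Star).
Notation ZO := (Zero, One).
Notation OZ := (One, Zero).

Fixpoint fill2 (r1 r2 : seq sym) (W : seq col) : seq col :=
  if W is (x1, x2) :: W' then
    ((fill_head r1 x1).1, (fill_head r2 x2).1) ::
      fill2 (fill_head r1 x1).2 (fill_head r2 x2).2 W'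
  else [::].

Definition fill2_back (r1 r2 : seq sym) (W : seq col) : seq col :=
  rev (fill2 r1 r2 (rev W)).

Lemma fill2_nil W : fill2 [::] [::] W = W.
Proof. by elim: W => // -[x1 x2] W IH; case: x1; case: x2; rewrite /= IH. Qed.

Lemma fill2_pair a1 b1 a2 b2 W :
  fill2 [:: a1; b1] [:: a2; b2] (SS :: SS :: W) = [:: (a1, a2); (b1, b2)] ++ W.
Proof. by rewrite /= fill2_nil. Qed.

Lemma zip_fill r1 r2 A B : zip (fill r1 A) (fill r2 B) = fill2 r1 r2 (zip A B).
Proof.
by elim: A B r1 r2 => [|x1 A IH] [|x2 B] r1 r2 //=; rewrite IH.
Qed.

Definition same_bit (c : col) : bool := (c.1 == c.2) && (c.1 != Star).

Definition active (W : seq col) : seq col := [seq c <- W | ~~ same_bit c].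

Definition profile (A B : chain) : seq col := active (zip A B).

Lemma active_cat V W : active (V ++ W) = active V ++ active W.
Proof. exact: filter_cat. Qed.

Lemma active_rev W : active (rev W) = rev (active W).
Proof. exact: filter_rev. Qed.

Lemma active_nseq k : active (nseq k SS) = nseq k SS.
Proof. by elim: k => //= k ->. Qed.

(* Filling never alters a column holding the same bit twice. *)
Lemma active_fill2 r1 r2 W :
  active (fill2 r1 r2 W) = active (fill2 r1 r2 (active W)).
Proof.
elim: W r1 r2 => [|[x1 x2] W IH] r1 r2 //=.
case hb: (same_bit (x1, x2)) => /=.
  move: hb; rewrite /same_bit /= => /andP [/eqP <- hx].
  by rewrite !fill_head_nonstar //= /same_bit /= eqxx hx /= IH.
by rewrite IH.
Qed.

Lemma profile_fill r1 r2 A B :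
  profile (fill r1 A) (fill r2 B) = active (fill2 r1 r2 (profile A B)).
Proof. by rewrite /profile zip_fill active_fill2. Qed.

Lemma profile_fill_back r1 r2 A B : size A = size B ->
  profile (fill_back r1 A) (fill_back r2 B) = active (fill2_back r1 r2 (profile A B)).
Proof.
move=> hs; rewrite /fill_back /fill2_back /profile -rev_zip ?size_fill ?size_rev //.
rewrite zip_fill !active_rev; congr rev.
by rewrite active_fill2 -rev_zip // active_rev.
Qed.

Lemma profile_wrap A B : size A = size B ->
  profile (wrap A) (wrap B) = SS :: rcons (profile A B) SS.
Proof. by move=> hs; rewrite /profile /= zip_rcons // /active filter_rcons. Qed.

Lemma profile_refl A : profile A A = nseq (clen A) SS.
Proof.
elim: A => //= x A; rewrite /profile /clen /= => ->.
by case: x => //=; rewrite /same_bit.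
Qed.

Definition stars1 (W : seq col) : nat := count (fun c : col => c.1 == Star) W.
Definition stars2 (W : seq col) : nat := count (fun c : col => c.2 == Star) W.

Lemma clen_profile A B : size A = size B ->
  clen A = stars1 (profile A B) /\ clen B = stars2 (profile A B).
Proof.
rewrite /stars1 /stars2 /profile !count_filter /clen.
elim: A B => [|x1 A IH] [|x2 B] //= [/IH [-> ->]].
by case: x1; case: x2.
Qed.

Lemma ndiff_profile A B : size A = size B ->
  ndiff A B = count (fun c : col => c.1 != c.2) (profile A B).
Proof.
rewrite /ndiff /profile count_filter => hs; rewrite hs maxnn.
elim: A B hs => [|x1 A IH] [|x2 B] //= [hs].
rewrite -(addn0 1) iotaDl count_map -IH //; congr (_ + _).
by case: x1; case: x2.
Qed.

Section Linked.

Variables (T : Type) (R : T -> T -> Prop).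

Fixpoint linked_from (x : T) (s : seq T) : Prop :=
  if s is y :: s' then R x y /\ linked_from y s' else True.

Definition linked (s : seq T) : Prop := if s is x :: s' then linked_from x s' else True.

Lemma linked_from_cat x s1 s2 :
  linked_from x s1 -> linked_from (last x s1) s2 -> linked_from x (s1 ++ s2).
Proof. by elim: s1 x => //= y s1 IH x [hxy h1] h2; split; last exact: IH. Qed.

Lemma linked_nth x0 s i :
  linked s -> i.+1 < size s -> R (nth x0 s i) (nth x0 s i.+1).
Proof.
case: s => // x s; elim: s x i => // y s IH x [|i] /= [hxy hs] hi //.
exact: IH.
Qed.

End Linked.

Lemma linked_flatten (T U : Type) (R : T -> T -> Prop) (R' : U -> U -> Prop)
    (Q : pred U) (F : U -> seq T) x0 L :
  (forall u, Q u -> ~~ nilp (F u)) ->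
  (forall u, Q u -> linked R (F u)) ->
  (forall u v, Q u -> Q v -> R' u v -> R (last x0 (F u)) (head x0 (F v))) ->
  all Q L -> linked R' L -> linked R (flatten (map F L)).
Proof.
move=> hne hF hjoin; elim: L => //= u L IH /andP [Qu QL] hL.
have {}IH : linked R (flatten (map F L)).
  by apply: IH => //; case: L hL {QL} => //= v L [].
case E: (F u) (hne u Qu) (hF u Qu) => [//|x s] _ /= hs.
apply: linked_from_cat => //.
case: L QL hL IH => //= v L /andP [Qv _] [huv _].
case Ev: (F v) (hne v Qv) => [//|y s'] _ /= hrest; split => //.
by have := hjoin u v Qu Qv huv; rewrite E Ev.
Qed.

Definition simple_cores : seq (seq col) :=
  [:: [:: SZ; SO]; [:: ZS; OS]; [:: SZ; SZ; ZO]; [:: ZS; ZS; OZ]].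

(* When [l = 0], [stars2 P + t] is the number of stars of the second chain. *)
Definition core_ok (n l t : nat) (P : seq col) : Prop :=
  [/\ P \in simple_cores & odd n -> l = 0 -> stars2 P + t = n %[mod 4]]
  \/ [/\ P = [:: SZ; ZO; OS], l = 0, t = 0 & n = 3 %[mod 4]]
  \/ [/\ P = [:: ZS; OZ; SO], l = 0, t = 0 & n = 1 %[mod 4]].

Definition shaped (n : nat) (A B : chain) : Prop :=
  size A = size B /\
  exists l t P, profile A B = nseq l SS ++ P ++ nseq t SS /\ core_ok n l t P.

Lemma core_ok_simple n l t P : P \in simple_cores ->
  (odd n -> l = 0 -> stars2 P + t = n %[mod 4]) -> core_ok n l t P.
Proof. by move=> *; left. Qed.

Lemma ndiff_shaped n A B : shaped n A B -> ndiff A B <= 3.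
Proof.
case=> hs [l [t [P [hW hP]]]]; rewrite ndiff_profile // hW !count_cat !count_nseq /=.
case: hP => [[+ _]|[][-> *]] //.
by rewrite !inE => /or4P [] /eqP ->.
Qed.

(** * Consecutive chains inside a block *)

Lemma shaped_front n a1 b1 a2 b2 Y : 2 <= clen Y ->
  core_ok n 0 (clen Y - 2) (active [:: (a1, a2); (b1, b2)]) ->
  shaped n (fill [:: a1; b1] Y) (fill [:: a2; b2] Y).
Proof.
move=> hY hP; split; first by rewrite !size_fill.
exists 0, (clen Y - 2), (active [:: (a1, a2); (b1, b2)]); split => //.
by rewrite profile_fill profile_refl -(subnKC hY) fill2_pair active_cat active_nseq addKn.
Qed.

Lemma shaped_back n c1 d1 c2 d2 Y : 2 <= clen Y ->
  core_ok n (clen Y - 2) 0 (active [:: (d1, d2); (c1, c2)]) ->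
  shaped n (fill_back [:: c1; d1] Y) (fill_back [:: c2; d2] Y).
Proof.
move=> hY hP; split; first by rewrite !size_fill_back.
exists (clen Y - 2), 0, (active [:: (d1, d2); (c1, c2)]); split => //.
rewrite profile_fill_back // profile_refl /fill2_back rev_nseq -(subnKC hY) fill2_pair.
by rewrite rev_cat rev_nseq active_cat active_nseq addKn cats0.
Qed.

Definition fill_ends (p q : seq sym) (X : chain) : chain := fill p (fill_back q X).

Lemma shaped_ends_back n p c1 d1 c2 d2 X :
  size p + 2 <= clen X -> 2 <= clen (fill p X) ->
  core_ok n (clen (fill p X) - 2) 0 (active [:: (d1, d2); (c1, c2)]) ->
  shaped n (fill_ends p [:: c1; d1] X) (fill_ends p [:: c2; d2] X).
Proof. by move=> hX; rewrite /fill_ends !fill_back_fill //; apply: shaped_back. Qed.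

Lemma shaped_back_front n Y : clen Y = 3 -> n = 3 %[mod 4] ->
  shaped n (fill_back [:: One; Zero] Y) (fill [:: Zero; One] Y).
Proof.
move=> hY hn; split; first by rewrite size_fill size_fill_back.
exists 0, 0, [:: SZ; ZO; OS]; split; last by right; left.
rewrite -[fill [:: Zero; One] Y]fill_back_skip2 -[X in fill_back [:: One; Zero] X]fill_skip2.
by rewrite profile_fill_back ?size_fill // profile_fill profile_refl hY.
Qed.

Lemma shaped_front_back n Y : clen Y = 3 -> n = 1 %[mod 4] ->
  shaped n (fill [:: Zero; One] Y) (fill_back [:: One; Zero] Y).
Proof.
move=> hY hn; split; first by rewrite size_fill size_fill_back.
exists 0, 0, [:: ZS; OZ; SO]; split; last by right; right.
rewrite -[fill [:: Zero; One] Y]fill_back_skip2 -[X in fill_back [:: One; Zero] X]fill_skip2.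
by rewrite profile_fill_back ?size_fill // profile_fill profile_refl hY.
Qed.

Lemma lam_even_big n C : ~~ odd n -> 2 <= clen C ->
  lam n C = [:: fill_ends skip2 skip2 (wrap C);
                fill_ends [:: Zero; One] skip2 (wrap C);
                fill_ends [:: Zero; One] [:: One; Zero] (wrap C);
                fill_ends skip2 [:: One; Zero] (wrap C)].
Proof.
move=> hn hC; rewrite /lam hn hC /fill_ends !fC_fill !lC_fill_back.
by rewrite !fill_back_skip2 !fill_skip2.
Qed.

Lemma lam_even_small n C : ~~ odd n -> clen C = 0 ->
  lam n C = [:: fill_back skip2 (wrap C); fill_back [:: One; Zero] (wrap C)].
Proof.
move=> hn hC; rewrite /lam hn hC fill_back_skip2 //= /fill_back rev_cons rev_rcons /=.
rewrite -[rcons (rev C) _]cats1 fill_cat clen_rev hC fill_clen0 ?clen_rev //=.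
by rewrite rev_cons rev_cat revK.
Qed.

Lemma lam_odd_big n C : odd n -> 3 <= clen C ->
  lam n C = [:: fill_ends skip2 skip2 (wrap C);
                fill_ends skip2 [:: One; Zero] (wrap C);
                fill_ends [:: Zero; One] [:: One; Zero] (wrap C);
                fill_ends [:: Zero; One] skip2 (wrap C)].
Proof.
move=> hn hC; rewrite /lam hn hC /fill_ends !fC_fill !lC_fill_back.
rewrite !fill_back_skip2 !fill_skip2 fill_back_fill // clen_wrap /=; lia.
Qed.

Lemma lam_odd_small n C : odd n -> clen C = 1 ->
  lam n C = [:: fill_back skip2 (wrap C); fill_back [:: One; Zero] (wrap C);
                fill [:: Zero; One] (wrap C)].
Proof. by move=> hn hC; rewrite /lam hn hC fC_fill lC_fill_back fill_back_skip2. Qed.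

Lemma clen_cases n C : odd (clen C) = odd n ->
  [\/ ~~ odd n /\ clen C = 0, ~~ odd n /\ 2 <= clen C,
      odd n /\ clen C = 1 | odd n /\ 3 <= clen C].
Proof.
move=> hp; case hn: (odd n).
- have [h|h] : clen C = 1 \/ 3 <= clen C by lia.
  + exact: Or43.
  + exact: Or44.
- have [h|h] : clen C = 0 \/ 2 <= clen C by lia.
  + exact: Or41.
  + exact: Or42.
Qed.

(* Consecutive members of [lam n C] are filled differently at one end only,
   except for [fill_back [:: One; Zero] (wrap C)] and [fill [:: Zero; One] (wrap C)]
   when [C] has a single star. *)
Lemma linked_rho n C : odd (clen C) = odd n -> linked (shaped n.+2) (rho n C).
Proof.
move=> hp; rewrite /rho; case: (clen_cases hp) => -[hn hC];
  [rewrite lam_even_small | rewrite lam_even_big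
  | rewrite lam_odd_small | rewrite lam_odd_big] => //.
all: move: (wrap C) (clen_wrap C) => X hX; case: eqP => hfwd; rewrite /rev /=.
all: repeat match goal with |- _ /\ _ => split end => //.
all: first [apply: shaped_front | apply: shaped_ends_back | apply: shaped_back
           | apply: shaped_back_front | apply: shaped_front_back].
all: rewrite ?clen_fill ?clen_fill_back ?hX ?hC /=; try lia.
all: by apply: core_ok_simple => //= *; lia.
Qed.

Definition lam_last (n : nat) (C : chain) : chain :=
  if odd n then fill [:: Zero; One] (wrap C) else fill_back [:: One; Zero] (wrap C).

Lemma lam_ends n C : odd (clen C) = odd n ->
  exists s, lam n C = wrap C :: rcons s (lam_last n C).
Proof.
move=> hp; rewrite /lam_last; case hn: (odd n).
- rewrite /lam hn fC_fill; case: ifP => _; first by eexists [:: _; _].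
  by exists [:: lC (wrap C)].
- case: (clen_cases hp); rewrite hn => -[// _ hC].
  + by rewrite lam_even_small ?hn // fill_back_skip2; exists [::].
  + by rewrite /lam hn hC lC_fill_back; eexists [:: _; _].
Qed.

Lemma rho_ends n C : odd (clen C) = odd n ->
  [/\ ~~ nilp (rho n C),
      head [::] (rho n C) = if clen C == n %[mod 4] then wrap C else lam_last n C
    & last [::] (rho n C) = if clen C == n %[mod 4] then lam_last n C else wrap C].
Proof.
move/lam_ends => [s hs]; rewrite /rho hs.
by case: ifP => _; rewrite ?rev_cons ?rev_rcons /= ?last_rcons.
Qed.

Lemma odd_clen_rho n C : odd (clen C) = odd n ->
  all (fun X => odd (clen X) == odd n) (rho n C).
Proof.
move=> hp; suff : all (fun X => odd (clen X) == odd n) (lam n C).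
  by rewrite /rho; case: ifP; rewrite ?all_rev.
case: (clen_cases hp) => -[hn hC];
  [rewrite lam_even_small | rewrite lam_even_big
  | rewrite lam_odd_small | rewrite lam_odd_big] => //.
all: move: (wrap C) (clen_wrap C) => X hX /=; rewrite /fill_ends.
all: rewrite ?clen_fill ?clen_fill_back /=; lia.
Qed.

(** * Junctions between blocks *)

Lemma stars_shape l t P :
  stars1 (nseq l SS ++ P ++ nseq t SS) = l + stars1 P + t /\
  stars2 (nseq l SS ++ P ++ nseq t SS) = l + stars2 P + t.
Proof. by rewrite /stars1 /stars2 !count_cat !count_nseq /= !mul1n !addnA. Qed.

Lemma rcons_nseq (T : Type) k (x : T) : rcons (nseq k x) x = nseq k.+1 x.
Proof. by elim: k => //= k ->. Qed.

Lemma wrap_shape l t P :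
  SS :: rcons (nseq l SS ++ P ++ nseq t SS) SS = nseq l.+1 SS ++ P ++ nseq t.+1 SS.
Proof. by rewrite !rcons_cat rcons_nseq. Qed.

Lemma simple_core_facts P : P \in simple_cores ->
  active P = P /\ (stars1 P = 2 /\ stars2 P = 0 \/ stars1 P = 0 /\ stars2 P = 2).
Proof. by rewrite !inE => /or4P [] /eqP ->; split => //; first [by left | by right]. Qed.

Lemma active_shape l t P : active P = P ->
  active (nseq l SS ++ P ++ nseq t SS) = nseq l SS ++ P ++ nseq t SS.
Proof. by move=> hP; rewrite !active_cat !active_nseq hP. Qed.

Lemma active_fill2_bits a b W : a != Star -> b != Star ->
  active (fill2 [:: a; b] [:: a; b] (SS :: SS :: W)) = active W.
Proof. by move=> ha hb; rewrite fill2_pair /= /same_bit /= !eqxx ha hb. Qed.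

Lemma active_fill2_back_bits a b W : a != Star -> b != Star ->
  active (fill2_back [:: a; b] [:: a; b] (W ++ [:: SS; SS])) = active W.
Proof.
move=> ha hb; rewrite /fill2_back rev_cat /= fill2_nil (rev_cat [:: _; _]) revK.
by rewrite active_cat /= /same_bit /= !eqxx ha hb cats0.
Qed.

Lemma active_fill2_back_tail l P : P \in simple_cores ->
  active (fill2_back [:: One; Zero] [:: One; Zero] (nseq l.+1 SS ++ P ++ [:: SS])) =
  nseq l SS ++ (if stars1 P == 2 then [:: SZ; SZ; ZO] else [:: ZS; ZS; OZ]).
Proof.
rewrite -rcons_nseq cat_rcons /fill2_back rev_cat rev_nseq !inE => /or4P [] /eqP -> /=.
all: by rewrite fill2_nil active_rev /= active_nseq (rev_cat [:: _; _; _]) rev_nseq.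
Qed.

Lemma size_wrap C : size (wrap C) = (size C).+2.
Proof. by rewrite /= size_rcons. Qed.

Lemma shaped_junction_simple n C C' l t P :
  size C = size C' -> odd (clen C) = odd n -> odd (clen C') = odd n ->
  profile C C' = nseq l SS ++ P ++ nseq t SS -> P \in simple_cores ->
  (odd n -> l = 0 -> stars2 P + t = n %[mod 4]) ->
  shaped n.+2 (if clen C == n %[mod 4] then lam_last n C else wrap C)
              (if clen C' == n %[mod 4] then wrap C' else lam_last n C').
Proof.
move=> hs hp hp' hW hP hodd; have [hact hst] := simple_core_facts hP.
have [] := clen_profile hs; have [] := stars_shape l t P; rewrite hW => -> -> c1 c2.
have hsw : size (wrap C) = size (wrap C') by rewrite !size_wrap hs.
(* The star counts of [C] and [C'] differ by 2 and have the parity of [n], so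
   exactly one of them is [n] modulo 4. *)
case: eqP => f1; case: eqP => f2; try (exfalso; lia).
- rewrite /lam_last; case hn: (odd n).
  + case: l hW hodd c1 c2 => [|l] hW hodd c1 c2; first by exfalso; lia.
    split; first by rewrite !size_fill.
    exists l, t.+1, P; split; last by apply: core_ok_simple => // _ hl; lia.
    by rewrite profile_fill profile_wrap // hW wrap_shape active_fill2_bits // active_shape.
  + split; first by rewrite !size_fill_back.
    case: t hW hodd c1 c2 => [|t] hW hodd c1 c2.
      exists l, 0, (if stars1 P == 2 then [:: SZ; SZ; ZO] else [:: ZS; ZS; OZ]).
      rewrite profile_fill_back // profile_wrap // hW wrap_shape active_fill2_back_tail //.
      by split; [rewrite cats0 | left; split; [case: ifP | rewrite /= hn]].
    exists l.+1, t, P; split; last by apply: core_ok_simple; rewrite //= hn.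
    rewrite profile_fill_back // profile_wrap // hW wrap_shape -addn2 nseqD !catA.
    by rewrite active_fill2_back_bits // -!catA active_shape.
- split => //; exists l.+1, t.+1, P; split; first by rewrite profile_wrap // hW wrap_shape.
  exact: core_ok_simple.
Qed.

Lemma shaped_junction_crossed n C C' : size C = size C' ->
  profile C C' = [:: SZ; ZO; OS] -> n = 3 %[mod 4] ->
  shaped n.+2 (if clen C == n %[mod 4] then lam_last n C else wrap C)
              (if clen C' == n %[mod 4] then wrap C' else lam_last n C').
Proof.
move=> hs hW hn; have [c1 c2] := clen_profile hs; rewrite hW /stars1 /stars2 /= in c1 c2.
rewrite /lam_last c1 c2.
have -> : (1 == n %[mod 4]) = false by apply/eqP; lia.
have -> : odd n by lia.
split; first by rewrite size_fill !size_wrap hs.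
exists 0, 1, [:: SZ; SZ; ZO]; split; last by left; split => //= _ _; lia.
by rewrite -[wrap C]fill_skip2 profile_fill profile_wrap // hW.
Qed.

Lemma shaped_junction_crossed' n C C' : size C = size C' ->
  profile C C' = [:: ZS; OZ; SO] -> n = 1 %[mod 4] ->
  shaped n.+2 (if clen C == n %[mod 4] then lam_last n C else wrap C)
              (if clen C' == n %[mod 4] then wrap C' else lam_last n C').
Proof.
move=> hs hW hn; have [c1 c2] := clen_profile hs; rewrite hW /stars1 /stars2 /= in c1 c2.
rewrite /lam_last c1 c2.
have -> : (1 == n %[mod 4]) = true by apply/eqP; lia.
have -> : odd n by lia.
split; first by rewrite size_fill !size_wrap hs.
exists 0, 1, [:: ZS; ZS; OZ]; split; last by left; split => //= _ _; lia.
by rewrite -[wrap C']fill_skip2 profile_fill profile_wrap // hW.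
Qed.

Lemma shaped_junction n C C' :
  odd (clen C) = odd n -> odd (clen C') = odd n -> shaped n C C' ->
  shaped n.+2 (last [::] (rho n C)) (head [::] (rho n C')).
Proof.
move=> hp hp' [hs [l [t [P [hW hP]]]]].
have [_ _ ->] := rho_ends hp; have [_ -> _] := rho_ends hp'.
case: hP => [[hP hodd]|[[hP hl ht hn]|[hP hl ht hn]]].
- exact: shaped_junction_simple hs hp hp' hW hP hodd.
- by apply: shaped_junction_crossed; rewrite // hW hP hl ht.
- by apply: shaped_junction_crossed'; rewrite // hW hP hl ht.
Qed.

Lemma Lambda_invariant n :
  linked (shaped n) (Lambda n) /\ all (fun C => odd (clen C) == odd n) (Lambda n).
Proof.
elim/ltn_ind: n => -[|[|n]] IH //.
have [hlink hpar] := IH n (ltnW (ltnSn _)).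
split; last first.
  apply/allP => X /flattenP [_ /mapP [C hC ->] hX]; rewrite /= negbK.
  by have /allP := odd_clen_rho (eqP (allP hpar C hC)); apply.
apply: (linked_flatten (Q := fun C => odd (clen C) == odd n)) hpar hlink.
- by move=> C /eqP /rho_ends [].
- by move=> C /eqP; apply: linked_rho.
- by move=> C C' /eqP hp /eqP hp'; apply: shaped_junction.
Qed.

Theorem theorem23 (n : nat) : 1 <= n -> gray_code 3 (Lambda n).
Proof.
move=> _ i hi; have [hlink _] := Lambda_invariant n.
exact: ndiff_shaped (linked_nth [::] hlink hi).
Qed.
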